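(* Let $\mathcal{A}\in\mathbb{R}^{n\times n\times n}$ and $\mathcal{E}\in\mathbb{R}^{n\times n\times n}$ be such that $\mathcal{A}$ and $\tilde{\mathcal{A}}=\mathcal{A}+\mathcal{E}$ are piezoelectric-type tensors. Then $$\Big[\sqrt{(\lambda_{C\max}(\mathcal{A}))^2+\lambda_{Z\min}(\mathcal{S}_{\tilde{\mathcal{A}}}-\mathcal{S}_{\mathcal{A}})},\ \sqrt{(\lambda_{C\max}(\mathcal{A}))^2+\lambda_{Z\max}(\mathcal{S}_{\tilde{\mathcal{A}}}-\mathcal{S}_{\mathcal{A}})}\Big]\subseteq\big[\lambda_{C\max}(\mathcal{A})-\lambda_{C\max}(\mathcal{E}),\ \lambda_{C\max}(\mathcal{A})+\lambda_{C\max}(\mathcal{E})\big].$$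
   Context: A tensor $\mathcal{A}=(a_{ijk})\in\mathbb{R}^{n\times n\times n}$ is piezoelectric-type if $a_{ijk}=a_{ikj}$ for all $i,j,k$ (so $\mathcal{E}$ is piezoelectric-type too). For such $\mathcal{A}$, $\lambda_{C\max}(\mathcal{A})=\max\{\sum_{i,j,k}a_{ijk}x_iy_jy_k:\ \mathbf{x},\mathbf{y}\in\mathbb{R}^n,\ \mathbf{x}^T\mathbf{x}=\mathbf{y}^T\mathbf{y}=1\}$ is its largest $C$-eigenvalue (a $C$-eigenvalue being a real $\lambda$ with unit $\mathbf{x},\mathbf{y}$ satisfying $\sum_{j,k}a_{ijk}y_jy_k=\lambda x_i$ and $\sum_{j,k}a_{jki}x_jy_k=\lambda y_i$ for all $i$). The symmetric fourth-order tensor $\mathcal{S}_{\mathcal{A}}=(\bar b_{i_1i_2i_3i_4})$ is defined by $\bar b_{i_1i_2i_3i_4}=\frac13(b_{i_1i_2i_3i_4}+b_{i_1i_3i_2i_4}+b_{i_1i_4i_2i_3})$, where $b_{i_1i_2i_3i_4}=\sum_{i=1}^n a_{ii_1i_2}a_{ii_3i_4}$. For a symmetric fourth-order tensor $\mathcal{T}=(t_{i_1i_2i_3i_4})$, a $Z$-eigenvalue is a real $\lambda$ with some $\mathbf{x}\in\mathbb{R}^n$, $\mathbf{x}^T\mathbf{x}=1$, such that $\sum_{i_2,i_3,i_4}t_{ii_2i_3i_4}x_{i_2}x_{i_3}x_{i_4}=\lambda x_i$ for all $i$; $\lambda_{Z\max}(\mathcal{T})$ and $\lambda_{Z\min}(\mathcal{T})$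 denote the largest and smallest $Z$-eigenvalues, which equal respectively the maximum and minimum of $\mathcal{T}\mathbf{x}^4=\sum t_{i_1i_2i_3i_4}x_{i_1}x_{i_2}x_{i_3}x_{i_4}$ over unit vectors $\mathbf{x}\in\mathbb{R}^n$. *)

From HB Require Import structures.
From mathcomp Require Import all_boot all_order all_algebra.
From mathcomp Require Import reals.
Set Implicit Arguments. Unset Strict Implicit. Unset Printing Implicit Defensive.
Import Order.TTheory GRing.Theory Num.Theory.
Local Open Scope ring_scope.

Section Tensors.
Variables (R : realType) (n : nat).

Definition tensor3 := 'I_n -> 'I_n -> 'I_n -> R.
Definition tensor4 := 'I_n -> 'I_n -> 'I_n -> 'I_n -> R.
Definition vec := 'I_n -> R.

Definition add3 (A E : tensor3) : tensor3 := fun i j k => A i j k + E i j k.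
Definition sub4 (T U : tensor4) : tensor4 :=
  fun i1 i2 i3 i4 => T i1 i2 i3 i4 - U i1 i2 i3 i4.

Definition piezo (A : tensor3) : Prop := forall i j k, A i j k = A i k j.

Definition unitv (x : vec) : Prop := \sum_i x i ^+ 2 = 1.

Definition Cform (A : tensor3) (x y : vec) : R :=
  \sum_i \sum_j \sum_k A i j k * x i * y j * y k.

Definition is_lamCmax (A : tensor3) (lam : R) : Prop :=
  (exists x y, [/\ unitv x, unitv y & Cform A x y = lam]) /\
  (forall x y, unitv x -> unitv y -> Cform A x y <= lam).

Definition btens (A : tensor3) : tensor4 :=
  fun i1 i2 i3 i4 => \sum_i A i i1 i2 * A i i3 i4.

Definition SA (A : tensor3) : tensor4 :=
  fun i1 i2 i3 i4 =>
    (btens A i1 i2 i3 i4 + btens A i1 i3 i2 i4 + btens A i1 i4 i2 i3) / 3.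

Definition Zeig (T : tensor4) (lam : R) : Prop :=
  exists x : vec, unitv x /\
    forall i, \sum_i2 \sum_i3 \sum_i4 T i i2 i3 i4 * x i2 * x i3 * x i4
              = lam * x i.

Definition is_lamZmax (T : tensor4) (lam : R) : Prop :=
  Zeig T lam /\ forall mu, Zeig T mu -> mu <= lam.
Definition is_lamZmin (T : tensor4) (lam : R) : Prop :=
  Zeig T lam /\ forall mu, Zeig T mu -> lam <= mu.

End Tensors.

(* Write v := A x x and w := E x x.  Expanding the symmetrisation gives
   S_A x^4 = |A x x|^2 for every third-order tensor, hence (S_{A+E} - S_A) x^4 = 2 <v, w> + |w|^2.  As
   lambda_Cmax(A) is the maximum of <z, A x x> over unit x and z, we get
   |<z, A x x>| <= lambda_Cmax(A) |z|; this bounds |v|, |w| and <v, w> and yields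
     (lambda_Cmax(A) - |w|)^2 <= lambda_Cmax(A)^2 + (S_{A+E} - S_A) x^4
                              <= (lambda_Cmax(A) + lambda_Cmax(E))^2
   with |w| <= lambda_Cmax(E).  The extreme Z-eigenvalues are values of this
   quartic form at unit vectors. *)
From HB Require Import structures.
From mathcomp Require Import all_boot all_order all_algebra.
From mathcomp Require Import reals.
From mathcomp Require Import ring lra.
Set Implicit Arguments. Unset Strict Implicit. Unset Printing Implicit Defensive.
Import Order.TTheory GRing.Theory Num.Theory.
Local Open Scope ring_scope.

Lemma le_sqrtr_of_sqr_le (R : rcfType) (a b : R) : b ^+ 2 <= a -> b <= Num.sqrt a.
Proof.
move=> le_b2a; have [b_lt0 | b_ge0] := ltP b 0.
  exact: le_trans (ltW b_lt0) (sqrtr_ge0 a).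
by rewrite -(ger0_norm b_ge0) -sqrtr_sqr ler_wsqrtr.
Qed.

Lemma sqrtr_le_of_le_sqr (R : rcfType) (a b : R) :
  0 <= b -> a <= b ^+ 2 -> Num.sqrt a <= b.
Proof.
by move=> b_ge0 le_ab2; rewrite -(ger0_norm b_ge0) -sqrtr_sqr ler_wsqrtr.
Qed.

Section QuarticForms.
Variables (R : realType) (n : nat).
Implicit Types (A E : tensor3 R n) (x y z : vec R n) (T U : tensor4 R n).

Definition Ayy A y : vec R n := fun i => \sum_j \sum_k A i j k * y j * y k.

Definition dot x y := \sum_i x i * y i.

Definition norm x := Num.sqrt (dot x x).

Definition form4 T x :=
  \sum_i x i * \sum_i2 \sum_i3 \sum_i4 T i i2 i3 i4 * x i2 * x i3 * x i4.

Lemma dot_ge0 x : 0 <= dot x x.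
Proof. by apply: sumr_ge0 => i _; rewrite -expr2 sqr_ge0. Qed.

Lemma norm_ge0 x : 0 <= norm x.
Proof. exact: sqrtr_ge0. Qed.

Lemma sqr_norm x : norm x ^+ 2 = dot x x.
Proof. exact/sqr_sqrtr/dot_ge0. Qed.

Lemma norm_eq0 x : norm x = 0 -> forall i, x i = 0.
Proof.
move=> /eqP; rewrite sqrtr_eq0 => dot_le0 i.
have dot0 : dot x x = 0 by apply/eqP; rewrite eq_le dot_le0 dot_ge0.
have sq_ge0 j : 0 <= x j * x j by rewrite -expr2 sqr_ge0.
have /eqP := psumr_eq0P (fun j _ => sq_ge0 j) dot0 (i := i) isT.
by rewrite mulf_eq0 orbb => /eqP.
Qed.

Lemma dotC x y : dot x y = dot y x.
Proof. by apply: eq_bigr => i _; rewrite mulrC. Qed.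

Lemma dotNl x y : dot (fun i => - x i) y = - dot x y.
Proof. by rewrite /dot -sumrN; apply: eq_bigr => i _; rewrite mulNr. Qed.

Lemma normN x : norm (fun i => - x i) = norm x.
Proof. by rewrite /norm /dot; under eq_bigr do rewrite mulrNN. Qed.

Lemma unitv_normalize z : norm z != 0 -> unitv (fun i => z i / norm z).
Proof.
move=> nz_z; rewrite /unitv; under eq_bigr do rewrite expr_div_n.
rewrite -mulr_suml.
have -> : \sum_i z i ^+ 2 = norm z ^+ 2.
  by rewrite sqr_norm; apply: eq_bigr => i _; rewrite expr2.
by rewrite divff // sqrf_eq0.
Qed.

Lemma Cform_dot A x y : Cform A x y = dot x (Ayy A y).
Proof.
apply: eq_bigr => i _; rewrite /Ayy mulr_sumr; apply: eq_bigr => j _.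
by rewrite mulr_sumr; apply: eq_bigr => k _; ring.
Qed.

Lemma Ayy_add A E y i : Ayy (add3 A E) y i = Ayy A y i + Ayy E y i.
Proof.
rewrite /Ayy -big_split; apply: eq_bigr => j _; rewrite -big_split.
by apply: eq_bigr => k _; rewrite /add3 /=; ring.
Qed.

Lemma form4E T x :
  form4 T x = \sum_a \sum_b \sum_c \sum_d T a b c d * (x a * x b * x c * x d).
Proof.
apply: eq_bigr => a _; rewrite mulr_sumr; apply: eq_bigr => b _.
rewrite mulr_sumr; apply: eq_bigr => c _; rewrite mulr_sumr.
by apply: eq_bigr => d _; ring.
Qed.

Lemma form4D T U x :
  form4 (fun a b c d => T a b c d + U a b c d) x = form4 T x + form4 U x.
Proof.
rewrite !form4E -big_split; apply: eq_bigr => a _; rewrite -big_split.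
apply: eq_bigr => b _; rewrite -big_split; apply: eq_bigr => c _.
by rewrite -big_split; apply: eq_bigr => d _; rewrite mulrDl.
Qed.

Lemma form4B T U x : form4 (sub4 T U) x = form4 T x - form4 U x.
Proof.
rewrite !form4E -sumrB; apply: eq_bigr => a _; rewrite -sumrB.
apply: eq_bigr => b _; rewrite -sumrB; apply: eq_bigr => c _.
by rewrite -sumrB; apply: eq_bigr => d _; rewrite mulrBl.
Qed.

Lemma form4Mr T k x : form4 (fun a b c d => T a b c d * k) x = form4 T x * k.
Proof.
rewrite !form4E mulr_suml; apply: eq_bigr => a _; rewrite mulr_suml.
apply: eq_bigr => b _; rewrite mulr_suml; apply: eq_bigr => c _.
by rewrite mulr_suml; apply: eq_bigr => d _; rewrite mulrAC.
Qed.

Lemma form4_swap23 T x : form4 (fun a b c d => T a c b d) x = form4 T x.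
Proof.
rewrite !form4E; apply: eq_bigr => a _; rewrite exchange_big.
by do 3![apply: eq_bigr => ? _]; congr (_ * _); ring.
Qed.

Lemma form4_swap34 T x : form4 (fun a b c d => T a b d c) x = form4 T x.
Proof.
rewrite !form4E; apply: eq_bigr => a _; apply: eq_bigr => b _.
by rewrite exchange_big; do 2![apply: eq_bigr => ? _]; congr (_ * _); ring.
Qed.

Lemma form4_btens A x : form4 (btens A) x = dot (Ayy A x) (Ayy A x).
Proof.
rewrite form4E /dot /Ayy.
transitivity (\sum_i \sum_a \sum_b \sum_c \sum_d
                A i a b * A i c d * (x a * x b * x c * x d)).
  rewrite [RHS]exchange_big; apply: eq_bigr => a _.
  rewrite [RHS]exchange_big; apply: eq_bigr => b _.
  rewrite [RHS]exchange_big; apply: eq_bigr => c _.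
  by rewrite [RHS]exchange_big; apply: eq_bigr => d _; rewrite mulr_suml.
apply: eq_bigr => i _; rewrite mulr_suml; apply: eq_bigr => a _.
rewrite mulr_suml; apply: eq_bigr => b _; rewrite mulr_sumr; apply: eq_bigr => c _.
by rewrite mulr_sumr; apply: eq_bigr => d _; ring.
Qed.

Lemma form4_SA A x : form4 (SA A) x = dot (Ayy A x) (Ayy A x).
Proof.
have swap_cb : form4 (fun a b c d => btens A a c b d) x = form4 (btens A) x.
  exact: form4_swap23.
have swap_dbc : form4 (fun a b c d => btens A a d b c) x = form4 (btens A) x.
  by rewrite (form4_swap34 (fun a b c d => btens A a c b d)) swap_cb.
rewrite /SA form4Mr (form4D (fun a b c d => btens A a b c d + btens A a c b d)).
by rewrite form4D swap_cb swap_dbc form4_btens; field.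
Qed.

Lemma Zeig_form4 T lam : Zeig T lam -> exists2 x, unitv x & form4 T x = lam.
Proof.
move=> [x [ux eig_x]]; exists x => //.
rewrite /form4; under eq_bigr do rewrite eig_x.
by rewrite -[RHS]mulr1 -ux mulr_sumr; apply: eq_bigr => i _; rewrite mulrCA expr2.
Qed.

Section LambdaCmax.
Variables (A : tensor3 R n) (l : R).
Hypothesis lamA : is_lamCmax A l.

Lemma lamCmax_ge0 : 0 <= l.
Proof.
case: lamA => [[x [y [ux uy <-]]] le_l].
have uNx : unitv (fun i => - x i) by rewrite /unitv; under eq_bigr do rewrite sqrrN.
have := le_l _ _ uNx uy; rewrite !Cform_dot dotNl; lra.
Qed.

Lemma dot_Ayy_le y z : unitv y -> dot z (Ayy A y) <= l * norm z.
Proof.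
move=> uy; have [z0 | nz_z] := eqVneq (norm z) 0.
  by rewrite z0 mulr0 /dot big1 // => i _; rewrite (norm_eq0 z0) mul0r.
have norm_gt0 : 0 < norm z by rewrite lt_neqAle eq_sym nz_z sqrtr_ge0.
have -> : dot z (Ayy A y) = dot (fun i => z i / norm z) (Ayy A y) * norm z.
  by rewrite /dot mulr_suml; apply: eq_bigr => i _; rewrite mulrAC divfK.
by rewrite ler_pM2r // -Cform_dot; apply: lamA.2 (unitv_normalize nz_z) uy.
Qed.

Lemma dot_Ayy_ge y z : unitv y -> - (l * norm z) <= dot z (Ayy A y).
Proof.
move=> uy; have := dot_Ayy_le (fun i => - z i) uy.
by rewrite dotNl normN lerNl.
Qed.

Lemma norm_Ayy_le y : unitv y -> norm (Ayy A y) <= l.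
Proof.
move=> uy; have := dot_Ayy_le (Ayy A y) uy; rewrite -sqr_norm.
by have := norm_ge0 (Ayy A y); have := lamCmax_ge0; nra.
Qed.

End LambdaCmax.

Section Perturbation.
Variables (A E : tensor3 R n) (lA lE : R) (x : vec R n).
Hypotheses (lamA : is_lamCmax A lA) (lamE : is_lamCmax E lE) (ux : unitv x).

Let D := sub4 (SA (add3 A E)) (SA A).

Lemma form4_perturbation :
  form4 D x = 2 * dot (Ayy A x) (Ayy E x) + dot (Ayy E x) (Ayy E x).
Proof.
rewrite form4B !form4_SA /dot [2 * _]mulr_sumr -big_split -sumrB.
by apply: eq_bigr => i _; rewrite Ayy_add /=; ring.
Qed.

Lemma form4_perturbation_le : lA ^+ 2 + form4 D x <= (lA + lE) ^+ 2.
Proof.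
rewrite form4_perturbation -sqr_norm.
have vw_le := dot_Ayy_le lamE (Ayy A x) ux.
have v_le := norm_Ayy_le lamA ux; have w_le := norm_Ayy_le lamE ux.
have := norm_ge0 (Ayy A x); have := norm_ge0 (Ayy E x).
by have := lamCmax_ge0 lamE; nra.
Qed.

Lemma form4_perturbation_ge : lE <= lA -> (lA - lE) ^+ 2 <= lA ^+ 2 + form4 D x.
Proof.
move=> lE_le_lA; rewrite form4_perturbation -sqr_norm.
have wv_ge := dot_Ayy_ge lamA (Ayy E x) ux.
have w_le := norm_Ayy_le lamE ux; have := norm_ge0 (Ayy E x).
rewrite [dot (Ayy E x) _]dotC in wv_ge; nra.
Qed.

End Perturbation.
End QuarticForms.

Theorem theorem2p3 (R : realType) (n : nat) (A E : tensor3 R n)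
  (lA lE zmin zmax : R) :
  piezo A -> piezo (add3 A E) ->
  is_lamCmax A lA -> is_lamCmax E lE ->
  is_lamZmin (sub4 (SA (add3 A E)) (SA A)) zmin ->
  is_lamZmax (sub4 (SA (add3 A E)) (SA A)) zmax ->
  forall t : R,
    t \in `[Num.sqrt (lA ^+ 2 + zmin), Num.sqrt (lA ^+ 2 + zmax)] ->
    t \in `[lA - lE, lA + lE].
Proof.
move=> _ _ lamA lamE [/Zeig_form4 [x1 ux1 <-] _] [/Zeig_form4 [x2 ux2 <-] _] t.
rewrite !in_itv /= => /andP [t_ge t_le]; apply/andP; split.
- apply: le_trans t_ge; have [lE_le_lA | lA_lt_lE] := leP lE lA.
    exact/le_sqrtr_of_sqr_le/form4_perturbation_ge.
  by apply: le_trans (sqrtr_ge0 _); lra.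
- apply: le_trans t_le _; apply: sqrtr_le_of_le_sqr.
    by have := lamCmax_ge0 lamA; have := lamCmax_ge0 lamE; lra.
  exact: form4_perturbation_le.
Qed.
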